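(* Let $k \ge 1$, $r \ge 0$ and $m \in [0,k]$ be integers, let $\mathcal{P} \subseteq \mathcal{X}$ be a finite point set, and let $\mathcal{U}, \mathcal{V} \subseteq \mathcal{X}$ be sets of centers with $|\mathcal{U}| = k$ and $|\mathcal{V}| = k + r$. If the number of well-separated pairs with respect to $(\mathcal{U},\mathcal{V})$ is $k - m$, then there exists a subset $\tilde{\mathcal{U}} \subseteq \mathcal{U}$ of size at most $k - \lfloor (m-r)/4 \rfloor$ such that $\mathrm{cost}(\tilde{\mathcal{U}}, \mathcal{P}) \le 6\gamma \cdot \bigl(\mathrm{cost}(\mathcal{U},\mathcal{P}) + \mathrm{cost}(\mathcal{V},\mathcal{P})\bigr)$.
   Context: $(\mathcal{X}, d)$ is a metric space. For $\mathcal{W} \subseteq \mathcal{X}$ and $p \in \mathcal{X}$, $d(p,\mathcal{W}) = \min_{q \in \mathcal{W}} d(p,q)$, and $\mathrm{cost}(\mathcal{W},\mathcal{P}) = \sum_{p \in \mathcal{P}} d(p,\mathcal{W})$. The constant $\gamma$ equals $4000$. For $\mathcal{U},\mathcal{V} \subseteq \mathcal{X}$, a pair $(u,v) \in \mathcal{U} \times \mathcal{V}$ is well-separated with respect to $(\mathcal{U},\mathcal{V})$ if $d(u, \mathcal{U} \setminus \{u\}) \ge \gamma \cdot d(u,v)$ and $d(v, \mathcal{V} \setminus \{v\}) \ge \gamma \cdot d(u,v)$. *)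

From HB Require Import structures.
From mathcomp Require Import all_boot all_order all_algebra.
From mathcomp Require Import finmap.
Set Implicit Arguments. Unset Strict Implicit. Unset Printing Implicit Defensive.
Import Order.TTheory GRing.Theory Num.Theory.
Local Open Scope fset_scope.
Local Open Scope ring_scope.

Definition is_metric (R : realFieldType) (X : choiceType) (d : X -> X -> R) : Prop :=
  [/\ forall x y, 0 <= d x y,
      forall x y, d x y = 0 <-> x = y,
      forall x y, d x y = d y x
    & forall x y z, d x z <= d x y + d y z].

(* d(p, W) = min_{q in W} d(p, q)  (only meaningful for W nonempty;
   returns 0 for W empty, a case never used below) *)
Definition dist_set (R : realFieldType) (X : choiceType) (d : X -> X -> R)
  (p : X) (W : {fset X}) : R :=
  match enum_fset W with
  | [::] => 0
  | q0 :: s => \big[Num.min/d p q0]_(q <- s) d p q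
  end.

Definition cost (R : realFieldType) (X : choiceType) (d : X -> X -> R)
  (W P : {fset X}) : R :=
  \sum_(p <- P) dist_set d p W.

Definition gamma (R : realFieldType) : R := 4000%:R.

(* d(x, S \ {x}) >= c, with the convention min over the empty set = +oo *)
Definition far_from_others (R : realFieldType) (X : choiceType) (d : X -> X -> R)
  (x : X) (S : {fset X}) (c : R) : bool :=
  all (fun y => (y == x) || (c <= d x y)) (enum_fset S).

Definition well_separated (R : realFieldType) (X : choiceType) (d : X -> X -> R)
  (U V : {fset X}) (u v : X) : bool :=
  [&& u \in U, v \in V,
      far_from_others d u U (gamma R * d u v)
    & far_from_others d v V (gamma R * d u v)].

Definition num_well_separated (R : realFieldType) (X : choiceType) (d : X -> X -> R)
  (U V : {fset X}) : nat :=
  \sum_(u <- U) \sum_(v <- V) (well_separated d U V u v : nat).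

From HB Require Import structures.
From mathcomp Require Import all_boot all_order all_algebra.
From mathcomp Require Import finmap zify lra.
Set Implicit Arguments. Unset Strict Implicit. Unset Printing Implicit Defensive.
Import Order.TTheory GRing.Theory Num.Theory.
Local Open Scope fset_scope.

(* Split U into matched centers M (those with a well-separated partner, which is
   then their nearest point projV u of V), isolated centers I (unmatched, with
   C d(u, V) < d(u, U \ u) for C = 2 gamma + 2) and crowded ones. An isolated u is
   far from U, so (u, projV u) fails on the V side: projV u has another point of V
   within gamma d(u, V). These points, together with the projV u of all matched
   and isolated u, are pairwise distinct, since any coincidence yields a path
   between two far-apart centers of length less than
   (gamma + 1)(d(u1, V) + d(u2, V)) <= (C/2)(d(u1, V) + d(u2, V)). Hence
   |M| + 2|I| <= |V| = k + r and at least (m - r)/2 centers are crowded.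
   A crowded u has another center nbrU u within C d(u, V). In the functional graph
   of nbrU one can keep a set S of half the crowded centers containing no path
   u -> nbrU u -> nbrU (nbrU u); every center of U is then within 2C d(u, V) of
   U \ S, and the cost grows by a factor at most 1 + 2C <= 6 gamma. *)

Lemma cardfsU_disjoint (K : choiceType) (A B : {fset K}) :
  [disjoint A & B] -> #|` A `|` B| = (#|` A| + #|` B|)%N.
Proof. by move=> AB; apply/eqP; rewrite (leq_card_fsetU A B).2. Qed.

Lemma fsetD1_neq0 (K : choiceType) (A : {fset K}) x : (1 < #|` A|)%N -> A `\ x != fset0.
Proof. by rewrite -cardfs_gt0; have := cardfsD1 x A; lia. Qed.

Lemma card_fset4_le (K : choiceType) (z a b c : K) : (#|` [fset z; a; b; c]| <= 4)%N.
Proof.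
have sub : [fset z; a; b; c] `<=` [fset x in [:: z; a; b; c]].
  by apply/fsubsetP => x; rewrite !inE orbF -!orbA.
by apply: leq_trans (fsubset_leq_card sub) _; rewrite card_fseq size_undup.
Qed.

Section TwoStepFree.
Variables (X : choiceType) (f : X -> X).

Definition two_step_free (S : {fset X}) :=
  forall u, u \in S -> f u \in S -> f (f u) \notin S.

Lemma two_step_freeU (T S Rm : {fset X}) :
  two_step_free T -> two_step_free S -> {in T, forall u, f u \in Rm} ->
  [disjoint S & Rm] -> {in S, forall u, f u \notin T} ->
  two_step_free (T `|` S).
Proof.
move=> freeT freeS TRm /fdisjointP_sym RmS S_T u.
have T_of_Rm x : x \in Rm -> x \in T `|` S -> x \in T.
  by move=> xR; rewrite in_fsetU (negbTE (RmS x xR)) orbF.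
have S_of_notT x : x \notin T -> x \in T `|` S -> x \in S.
  by rewrite in_fsetU => /negbTE ->.
rewrite in_fsetU => /orP[uT|uS] fu; apply/negP => ffu.
- have fuT := T_of_Rm _ (TRm u uT) fu.
  by move: (freeT u uT fuT); rewrite (T_of_Rm _ (TRm _ fuT) ffu).
- have fuS := S_of_notT _ (S_T u uS) fu.
  by move: (freeS u uS fuS); rewrite (S_of_notT _ (S_T _ fuS) ffu).
Qed.

Definition half_two_step_free (A : {fset X}) :=
  exists S, [/\ S `<=` A, (#|` A| <= 2 * #|` S|)%N & two_step_free S].

Lemma half_two_step_free_extend (A T Rm : {fset X}) :
  T `<=` A -> T `<=` Rm -> two_step_free T -> {in T, forall u, f u \in Rm} ->
  {in A `\` Rm, forall u, f u \notin T} -> (#|` A `&` Rm| <= 2 * #|` T|)%N ->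
  half_two_step_free (A `\` Rm) -> half_two_step_free A.
Proof.
move=> TA TRm freeT fTRm S_T cardT [S [SA cardS freeS]].
have [_ SRm] := fsubsetDP _ _ _ SA.
have TS : [disjoint T & S] by apply: fdisjointWl TRm _; rewrite fdisjoint_sym.
exists (T `|` S); split.
- by rewrite fsubUset TA (fsubset_trans SA) ?fsubsetDl.
- by rewrite cardfsU_disjoint //; have := cardfsID Rm A; lia.
- apply: two_step_freeU freeT freeS fTRm SRm _ => u uS.
  exact: S_T (fsubsetP SA u uS).
Qed.

Lemma onto_self_injective (A : {fset X}) :
  {in A, forall a, exists2 z, z \in A & f z = a} ->
  {in A &, injective f} /\ {in A, forall u, f u \in A}.
Proof.
move=> onto; have Af : A `<=` f @` A.
  by apply/fsubsetP => a /onto [z zA <-]; apply: in_imfset.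
have cardf : (#|` f @` A| <= #|` A|)%N by apply: leq_imfset_card.
have /eqP fA : f @` A == A by rewrite eq_sym eqEfcard Af.
split; first by apply/card_in_imfsetP; rewrite fA.
by move=> u uA; rewrite -fA in_imfset.
Qed.

Lemma source_or_onto (A : {fset X}) :
  (exists2 a, a \in A & {in A, forall z, f z != a}) \/
  {in A, forall a, exists2 z, z \in A & f z = a}.
Proof.
case: (boolP (all (fun a => has (fun z => f z == a) A) A)) => [/allP onto|].
  by right => a /onto /hasP [z zA /eqP]; exists z.
by case/allPn => a aA /hasPn src; left; exists a.
Qed.

Lemma two_step_free1 a : f a != a -> two_step_free [fset a].
Proof. by move=> fa u; rewrite !inE => /eqP -> /eqP /eqP; rewrite (negbTE fa). Qed.

Section Induction.
Variable A : {fset X}.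
Hypothesis no_fixpoint : {in A, forall x, f x != x}.

Lemma half_two_step_free_single a :
  a \in A -> {in A, forall z, f z = a -> z = f a} ->
  half_two_step_free (A `\` [fset a; f a]) -> half_two_step_free A.
Proof.
move=> aA pre_a; apply: (half_two_step_free_extend (T := [fset a])).
- by rewrite fsub1set.
- by rewrite fsub1set fset21.
- exact/two_step_free1/no_fixpoint.
- by move=> u; rewrite inE => /eqP ->; rewrite !inE eqxx orbT.
- move=> u; rewrite !inE negb_or => /andP[/andP[ua ufa] uA]; apply/eqP => fu.
  by rewrite (pre_a u uA fu) eqxx in ufa.
- rewrite cardfs1; apply: leq_trans (fsubset_leq_card (fsubsetIr _ _)) _.
  by rewrite cardfs2; case: (_ != _).
Qed.

Lemma half_two_step_free_pair z a :
  a \in A -> f a \in A -> f (f a) != a ->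
  {in A, forall u, f u = a -> u = z} -> {in A, forall u, f u = f a -> u = a} ->
  half_two_step_free (A `\` [fset z; a; f a; f (f a)]) -> half_two_step_free A.
Proof.
move=> aA faA ffa pre_a pre_fa.
have afa : f a != a := no_fixpoint aA.
have ffafa : f (f a) != f a := no_fixpoint faA.
apply: (half_two_step_free_extend (T := [fset a; f a])).
- by rewrite fsubUset !fsub1set aA faA.
- by rewrite fsubUset !fsub1set !inE !eqxx !orbT.
- by move=> u; rewrite !inE => /orP[] /eqP ->;
    rewrite (negbTE ffa) (negbTE ffafa) ?orbF.
- by move=> u; rewrite !inE => /orP[] /eqP ->; rewrite eqxx !orbT.
- move=> u; rewrite !inE !negb_or => /andP[/andP[/andP[/andP[uz ua] _] _] uA].
  apply/andP; split; apply/eqP => fu.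
  + by rewrite (pre_a u uA fu) eqxx in uz.
  + by rewrite (pre_fa u uA fu) eqxx in ua.
- rewrite cardfs2 eq_sym afa; apply: leq_trans (fsubset_leq_card (fsubsetIr _ _)) _.
  exact: leq_trans (card_fset4_le _ _ _ _) _.
Qed.
End Induction.

Lemma half_two_step_free0 : half_two_step_free fset0.
Proof. by exists fset0; split; rewrite ?fsub0set // => u; rewrite inE. Qed.

Theorem half_two_step_free_exists (A : {fset X}) :
  {in A, forall x, f x != x} -> half_two_step_free A.
Proof.
(* Peel off a vertex without preimage or, when f permutes A, the start of a cycle. *)
have [N] := ubnP #|` A|; elim: N A => // N IH A cardA fixA.
have rec Rm : (exists2 a, a \in A & a \in Rm) -> half_two_step_free (A `\` Rm).
  move=> [a aA aR]; apply: IH => [|u]; last by rewrite in_fsetD => /andP[_ /fixA].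
  have : (0 < #|` A `&` Rm|)%N.
    by rewrite cardfs_gt0; apply/fset0Pn; exists a; rewrite in_fsetI aA aR.
  by have := cardfsID Rm A; lia.
have [[a aA src]|onto] := source_or_onto A.
  apply: (half_two_step_free_single fixA aA).
    by move=> z /src /eqP.
  by apply: rec; exists a; rewrite ?fset21.
have [inj into] := onto_self_injective onto.
have [->|/fset0Pn [z zA]] := eqVneq A fset0; first exact: half_two_step_free0.
set a := f z; have aA : a \in A := into z zA.
have pre_a : {in A, forall u, f u = a -> u = z} by move=> u uA; apply: inj.
have [faz|faz] := eqVneq (f a) z.
  apply: (half_two_step_free_single fixA aA).
    by move=> u uA /(pre_a u uA) ->.
  by apply: rec; exists a; rewrite ?fset21.
apply: (half_two_step_free_pair fixA (z := z) aA (into a aA)).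
- by apply: contra_neq faz => /(inj _ _ (into a aA) zA).
- exact: pre_a.
- by move=> u uA /(inj _ _ uA aA).
- by apply: rec; exists a; rewrite // !inE eqxx orbT.
Qed.
End TwoStepFree.

Local Open Scope ring_scope.

Section DistSet.
Variables (R : realFieldType) (X : choiceType) (d : X -> X -> R).

Lemma dist_set_le p (W : {fset X}) q : q \in W -> dist_set d p W <= d p q.
Proof.
rewrite /dist_set -[q \in W]/(q \in enum_fset W); case: (enum_fset W) => // q0 s.
elim: s q => [|a s IH] q; first by rewrite big_nil inE => /eqP ->.
rewrite big_cons ge_min !inE => /or3P[/eqP ->|/eqP ->|qs]; rewrite ?lexx ?orbT //.
- by rewrite IH ?inE ?eqxx ?orbT.
- by rewrite IH ?inE ?qs ?orbT.
Qed.

Lemma dist_set_attained p (W : {fset X}) :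
  W != fset0 -> exists2 q, q \in W & dist_set d p W = d p q.
Proof.
case/fset0Pn => x; rewrite /dist_set -[x \in W]/(x \in enum_fset W).
case E : (enum_fset W) => [//|q0 s] _.
have [q qs ->] : exists2 q, q \in q0 :: s & \big[Num.min/d p q0]_(q <- s) d p q = d p q.
  rewrite big_seq; apply: (big_ind (fun y => exists2 q, q \in q0 :: s & y = d p q)).
  - by exists q0; rewrite ?inE ?eqxx.
  - by move=> _ _ [q1 q1s ->] [q2 q2s ->]; rewrite minEle; case: ifP; [exists q1 | exists q2].
  - by move=> q qs; exists q; rewrite // inE qs orbT.
by exists q; rewrite // -[q \in W]/(q \in enum_fset W) E.
Qed.

Lemma nearest_selection (W : X -> {fset X}) : (forall x, W x != fset0) ->
  exists g : X -> X, forall x, g x \in W x /\ d x (g x) = dist_set d x (W x).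
Proof.
move=> W0; have ex x : exists q, (q \in W x) && (d x q == dist_set d x (W x)).
  by have [q qW ->] := dist_set_attained x (W0 x); exists q; rewrite qW eqxx.
by exists (fun x => xchoose (ex x)) => x; have /andP[-> /eqP] := xchooseP (ex x).
Qed.

Lemma far_from_othersP x (S : {fset X}) c :
  reflect {in S, forall y, y != x -> c <= d x y} (far_from_others d x S c).
Proof.
apply: (iffP allP) => far y yS; first by move: (far y yS) => /orP[->|].
by case: eqVneq => //= /far; apply.
Qed.

Hypothesis hd : is_metric d.

Lemma metric_ge0 x y : 0 <= d x y. Proof. by case: hd. Qed.
Lemma metricC x y : d x y = d y x. Proof. by case: hd. Qed.
Lemma metric_triangle x y z : d x z <= d x y + d y z. Proof. by case: hd. Qed.
Lemma metric_eq0 x y : d x y = 0 -> x = y. Proof. by case: hd => _ /(_ x y) []. Qed.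
Lemma metric_xx x : d x x = 0. Proof. by case: hd => _ /(_ x x) [_ ->]. Qed.

Lemma metric_le0 x y : d x y <= 0 -> x = y.
Proof. by move=> le0; apply: metric_eq0; apply/le_anti; rewrite le0 metric_ge0. Qed.

Lemma dist_set_ge0 p (W : {fset X}) : 0 <= dist_set d p W.
Proof.
by have [->//|/(dist_set_attained p) [q _ ->]] := eqVneq W fset0; apply: metric_ge0.
Qed.

Lemma cost_ge0 (W P : {fset X}) : 0 <= cost d W P.
Proof. by apply: sumr_ge0 => p _; apply: dist_set_ge0. Qed.

Lemma cost_le_of_cover (c : R) (U V Ut P : {fset X}) :
  0 <= c -> U != fset0 -> V != fset0 ->
  {in U, forall u, exists2 w, w \in Ut & d u w <= c * dist_set d u V} ->
  cost d Ut P <= (1 + c) * (cost d U P + cost d V P).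
Proof.
move=> c0 U0 V0 cover; rewrite /cost -big_split mulr_sumr /=.
apply: ler_sum => p _; have [u uU ->] := dist_set_attained p U0.
have [w wUt uw] := cover u uU; have [v vV pv] := dist_set_attained p V0.
have uv : dist_set d u V <= d u p + dist_set d p V.
  by rewrite pv (le_trans (dist_set_le u vV)) ?metric_triangle.
have := metric_ge0 p u; have := dist_set_ge0 p V; have := metric_triangle p u w.
rewrite (metricC u p) in uv; have := dist_set_le p wUt.
nra.
Qed.
End DistSet.

Lemma card_fset_sep_sum (T : choiceType) (A : {fset T}) (P : pred T) :
  #|` [fset x in A | P x]| = (\sum_(x <- A) P x)%N.
Proof.
rewrite card_fset_sum1 -big_fset_condE big_mkcond /=.
by apply: eq_bigr => x _; case: (P x).
Qed.

Section Separation.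
Variables (R : realFieldType) (X : choiceType) (d : X -> X -> R).
Hypothesis hd : is_metric d.
Local Notation g := (gamma R).
Local Notation C := (2 * gamma R + 2).

Lemma eq_of_far_common_point u1 u2 v :
  g * d u1 v <= d u1 u2 -> g * d u2 v <= d u1 u2 -> u1 = u2.
Proof.
move=> far1 far2; apply: (metric_le0 hd).
have := metric_triangle hd u1 v u2; rewrite (metricC hd v u2).
have := metric_ge0 hd u1 v; have := metric_ge0 hd u2 v.
rewrite /gamma in far1 far2; lra.
Qed.

Lemma isolated_path_long u1 u2 v1 v2 y :
  C * d u1 v1 < d u1 u2 -> C * d u2 v2 < d u1 u2 ->
  d v1 y < g * d u1 v1 -> d v2 y <= g * d u2 v2 -> False.
Proof.
move=> far1 far2 close1 close2.
have := metric_triangle hd u1 v1 u2; have := metric_triangle hd v1 y u2.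
have := metric_triangle hd y v2 u2; rewrite (metricC hd y v2) (metricC hd v2 u2).
have := metric_ge0 hd u1 v1; have := metric_ge0 hd u2 v2.
rewrite /gamma in far1 far2 close1 close2; lra.
Qed.

Lemma isolated_partner_long u w vu vw :
  C * d u vu < d u w -> d vu vw < g * d u vu -> g * d w vw <= d vw vu -> False.
Proof.
move=> far close sep; rewrite (metricC hd vw vu) in sep.
have := metric_triangle hd u vu w; have := metric_triangle hd vu vw w.
rewrite (metricC hd vw w); have := metric_ge0 hd u vu; have := metric_ge0 hd w vw.
rewrite /gamma in far close sep; lra.
Qed.

Variables U V : {fset X}.

Lemma well_separated_nearest u v w :
  well_separated d U V u v -> w \in V -> d u w <= d u v -> w = v.
Proof.
case/and4P => _ _ _ /far_from_othersP far wV uw; have [//|wv] := eqVneq w v.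
have vw := far w wV wv; suff vw0 : v = w by rewrite vw0 eqxx in wv.
apply: (metric_le0 hd); have := metric_triangle hd v u w; rewrite (metricC hd v u).
have := metric_ge0 hd u v; have := metric_ge0 hd v w.
rewrite /gamma in vw; lra.
Qed.

Lemma well_separated_unique u v w :
  well_separated d U V u v -> well_separated d U V u w -> v = w.
Proof.
move=> uv uw; have vV : v \in V by case/and4P: uv.
have wV : w \in V by case/and4P: uw.
case/orP: (le_total (d u v) (d u w)) => [vw|wv].
  exact: well_separated_nearest uw vV vw.
by apply/esym; apply: well_separated_nearest uv wV wv.
Qed.

Definition matched u := has (well_separated d U V u) V.

Lemma sum_well_separated u : (\sum_(v <- V) well_separated d U V u v)%N = matched u.
Proof.
case: (boolP (matched u)) => [/hasP [v vV uv]|unmatched].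
  rewrite (big_fsetD1 v) //= uv big1_fset // => w; rewrite in_fsetD1 => /andP[wv _] _.
  by apply/eqP; rewrite eqb0; apply: contra wv => uw; rewrite (well_separated_unique uw uv).
rewrite big1_seq // => v /= vV; apply/eqP; rewrite eqb0.
by apply: contra unmatched => uv; apply/hasP; exists v.
Qed.

Definition matched_centers := [fset u in U | matched u].
Definition isolated_centers :=
  [fset u in U | ~~ matched u & C * dist_set d u V < dist_set d u (U `\ u)].
Definition crowded_centers := U `\` (matched_centers `|` isolated_centers).

Lemma card_matched_centers : #|` matched_centers| = num_well_separated d U V.
Proof.
by rewrite card_fset_sep_sum; apply: eq_bigr => u _; rewrite sum_well_separated.
Qed.

Lemma matched_isolated_disjoint : [disjoint matched_centers & isolated_centers].
Proof. by apply/fdisjointP => u; rewrite !inE => /andP[_ ->]; rewrite andbF. Qed.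

Lemma matched_sub : matched_centers `<=` U.
Proof. by apply/fsubsetP => u; rewrite inE => /andP[]. Qed.

Lemma isolated_sub : isolated_centers `<=` U.
Proof. by apply/fsubsetP => u; rewrite inE => /andP[]. Qed.

Lemma card_crowded_centers :
  (#|` crowded_centers| + #|` matched_centers| + #|` isolated_centers|)%N = #|` U|.
Proof.
have MIU : matched_centers `|` isolated_centers `<=` U.
  by rewrite fsubUset matched_sub isolated_sub.
rewrite /crowded_centers cardfsDS // cardfsU_disjoint ?matched_isolated_disjoint //.
by have := fsubset_leq_card MIU; rewrite cardfsU_disjoint ?matched_isolated_disjoint //; lia.
Qed.

Section Packing.
Variables projV nbrV : X -> X.
Hypothesis projVP : forall x, projV x \in V /\ d x (projV x) = dist_set d x V.
Hypothesis nbrVP : forall y, nbrV y \in V `\ y /\ d y (nbrV y) = dist_set d y (V `\ y).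
Local Notation M := matched_centers.
Local Notation I := isolated_centers.

Lemma matched_partner u : matched u -> well_separated d U V u (projV u).
Proof.
case/hasP => v vV uv; have [pV pd] := projVP u.
by rewrite (well_separated_nearest uv pV) // pd dist_set_le.
Qed.

Lemma matched_far u u' : u \in M -> u' \in U -> u' != u -> g * d u (projV u) <= d u u'.
Proof.
rewrite inE => /andP[_ /matched_partner /and4P[_ _ /far_from_othersP far _]].
exact: far.
Qed.

Lemma partner_far u w :
  u \in M -> w \in V -> w != projV u -> g * d u (projV u) <= d (projV u) w.
Proof.
rewrite inE => /andP[_ /matched_partner /and4P[_ _ _ /far_from_othersP far]].
exact: far.
Qed.

Lemma isolated_far u u' : u \in I -> u' \in U -> u' != u -> C * d u (projV u) < d u u'.
Proof.
rewrite inE => /andP[_ /andP[_ lt]] u'U u'u; have [_ ->] := projVP u.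
by rewrite (lt_le_trans lt) // dist_set_le // in_fsetD1 u'u.
Qed.

Lemma separated_far u u' :
  u \in M `|` I -> u' \in U -> u' != u -> g * d u (projV u) <= d u u'.
Proof.
rewrite in_fsetU => /orP[uM|uI] u'U u'u; first exact: matched_far.
have := isolated_far uI u'U u'u; have := metric_ge0 hd u (projV u).
rewrite /gamma; lra.
Qed.

Lemma isolated_second_close u : u \in I ->
  [/\ nbrV (projV u) \in V, nbrV (projV u) != projV u
    & d (projV u) (nbrV (projV u)) < g * d u (projV u)].
Proof.
move=> uI; have := uI; rewrite inE => /andP[uU /andP[unmatched _]].
have [pV _] := projVP u; have [] := nbrVP (projV u); rewrite in_fsetD1 => /andP[-> ->] ->.
split=> //; have : ~~ well_separated d U V u (projV u).
  by apply: contra unmatched => uv; apply/hasP; exists (projV u).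
have farU : far_from_others d u U (g * d u (projV u)).
  by apply/far_from_othersP => u' u'U u'u; apply: separated_far; rewrite // inE uI orbT.
rewrite /well_separated uU pV farU /= => /allPn [y yV].
rewrite negb_or -ltNge => /andP[yp lt]; apply: le_lt_trans lt.
by rewrite dist_set_le // in_fsetD1 yp.
Qed.

Lemma projV_inj : {in M `|` I &, injective projV}.
Proof.
move=> u1 u2 u1MI u2MI e; have [//|ne] := eqVneq u1 u2.
have U_of u : u \in M `|` I -> u \in U by rewrite !inE => /orP[] /andP[].
apply: (eq_of_far_common_point (v := projV u1)).
  by apply: separated_far; rewrite // ?U_of // eq_sym.
by rewrite e (metricC hd u1); apply: separated_far; rewrite ?U_of.
Qed.

Lemma second_inj : {in I &, injective (nbrV \o projV)}.
Proof.
move=> u1 u2 u1I u2I /= e; have [//|ne] := eqVneq u1 u2; exfalso.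
have [_ _ close1] := isolated_second_close u1I.
have [_ _ close2] := isolated_second_close u2I.
apply: (isolated_path_long (u2 := u2) (v2 := projV u2) _ _ close1); rewrite ?e ?ltW //.
  by apply: isolated_far; rewrite // ?(fsubsetP isolated_sub) // eq_sym.
by rewrite (metricC hd u1); apply: isolated_far; rewrite ?(fsubsetP isolated_sub).
Qed.

Lemma second_neq_projV u w : u \in I -> w \in M `|` I -> nbrV (projV u) != projV w.
Proof.
move=> uI wMI; apply/eqP => e; have [_ second_neq close] := isolated_second_close uI.
have uU := fsubsetP isolated_sub u uI; rewrite e in close second_neq.
move: wMI; rewrite in_fsetU => /orP[wM|wI].
  have wu : w != u.
    by apply: contraTneq uI => <-; apply: (fdisjointP matched_isolated_disjoint).
  apply: (isolated_partner_long (isolated_far uI _ wu) close).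
    exact: fsubsetP matched_sub w wM.
  by apply: partner_far => //; [case: (projVP u) | rewrite eq_sym].
have [wu|wu] := eqVneq w u; first by rewrite wu eqxx in second_neq.
have wU := fsubsetP isolated_sub w wI.
apply: (isolated_path_long (isolated_far uI wU wu) _ close).
  by rewrite (metricC hd u); apply: isolated_far; rewrite // eq_sym.
by rewrite metric_xx // mulr_ge0 ?ler0n ?metric_ge0.
Qed.

Theorem card_matched_isolated : (#|` M| + 2 * #|` I| <= #|` V|)%N.
Proof.
have PQV : projV @` (M `|` I) `|` (nbrV \o projV) @` I `<=` V.
  apply/fsubsetP => x; rewrite in_fsetU => /orP[] /imfsetP [u uMI ->].
    by case: (projVP u).
  by case: (isolated_second_close uMI).
have PQ : [disjoint projV @` (M `|` I) & (nbrV \o projV) @` I].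
  apply/fdisjointP => _ /imfsetP [w wMI ->]; apply/negP => /imfsetP [u uI /eqP].
  by rewrite eq_sym (negbTE (second_neq_projV uI wMI)).
have := fsubset_leq_card PQV; rewrite cardfsU_disjoint //.
move/card_in_imfsetP/eqP: projV_inj => ->; move/card_in_imfsetP/eqP: second_inj => ->.
by rewrite cardfsU_disjoint ?matched_isolated_disjoint //; lia.
Qed.

End Packing.

Section Crowded.
Variable nbrU : X -> X.
Hypothesis nbrUP : forall x, nbrU x \in U `\ x /\ d x (nbrU x) = dist_set d x (U `\ x).

Lemma crowded_close u : u \in crowded_centers -> d u (nbrU u) <= C * dist_set d u V.
Proof.
rewrite !inE negb_or => /andP[/andP[uM uI] uU]; rewrite uU /= in uM uI.
by have [_ ->] := nbrUP u; rewrite leNgt; rewrite uM in uI.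
Qed.

Lemma crowded_cover (S : {fset X}) :
  S `<=` crowded_centers -> two_step_free nbrU S ->
  {in U, forall u, exists2 w, w \in U `\` S & d u w <= 2 * C * dist_set d u V}.
Proof.
move=> SA freeS u uU; have dV0 := dist_set_ge0 hd u V.
have [uS|uS] := boolP (u \in S); last first.
  by exists u; rewrite ?in_fsetD ?uS // metric_xx // !mulr_ge0 // /gamma; lra.
have close := crowded_close (fsubsetP SA u uS).
have [] := nbrUP u; rewrite in_fsetD1 => /andP[nu nU] nd.
have [nS|nS] := boolP (nbrU u \in S); last first.
  by exists (nbrU u); rewrite ?in_fsetD ?nS // /gamma in close *; lra.
have [] := nbrUP (nbrU u); rewrite in_fsetD1 => /andP[_ nnU] nnd.
exists (nbrU (nbrU u)); first by rewrite in_fsetD nnU (freeS u uS nS).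
have : d (nbrU u) (nbrU (nbrU u)) <= d u (nbrU u).
  by rewrite nnd (metricC hd u) dist_set_le // in_fsetD1 eq_sym nu.
have := metric_triangle hd u (nbrU u) (nbrU (nbrU u)).
by rewrite /gamma in close *; lra.
Qed.
End Crowded.
End Separation.

Unset Implicit Arguments.

Theorem lemma4p2 (R : realFieldType) (X : choiceType) (d : X -> X -> R)
  (hd : is_metric d) (k r m : nat) (hk : (1 <= k)%N) (hm : (m <= k)%N)
  (P U V : {fset X}) (hU : #|` U| = k) (hV : #|` V| = (k + r)%N)
  (hws : num_well_separated d U V = (k - m)%N) :
  exists Ut : {fset X},
    [/\ Ut `<=` U, Ut != fset0,
        (#|` Ut|%:Z <= k%:Z - ((m%:Z - r%:Z) %/ 4)%Z)%R
      & cost d Ut P <= 6%:R * gamma R * (cost d U P + cost d V P)].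
Proof.
have U0 : U != fset0 by rewrite -cardfs_gt0 hU.
have V0 : V != fset0 by rewrite -cardfs_gt0 hV addn_gt0 hk.
have costs0 := addr_ge0 (cost_ge0 hd U P) (cost_ge0 hd V P).
have [k1|k2] := leqP k 1.
  exists U; split => //; first by rewrite hU; lia.
  by have := cost_ge0 hd V P; rewrite /gamma; lra.
have U2 : (1 < #|` U|)%N by rewrite hU.
have V2 : (1 < #|` V|)%N by rewrite hV ltn_addr.
have [nbrU nbrUP] := nearest_selection d (fun x => fsetD1_neq0 x U2).
have [projV projVP] := nearest_selection d (fun=> V0).
have [nbrV nbrVP] := nearest_selection d (fun y => fsetD1_neq0 y V2).
have [|S [SA cardS freeS]] := @half_two_step_free_exists _ nbrU (crowded_centers d U V).
  by move=> x _; case: (nbrUP x); rewrite in_fsetD1 => /andP[].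
have cover := crowded_cover hd nbrUP SA freeS.
exists (U `\` S); split.
- exact: fsubsetDl.
- by case/fset0Pn: U0 => u /cover [w wUS _]; apply/fset0Pn; exists w.
- have := card_matched_isolated hd U projVP nbrVP; have := card_crowded_centers d U V.
  have SU := fsubset_trans SA (fsubsetDl _ _).
  by rewrite card_matched_centers // hws hU hV cardfsDS //; lia.
- apply: le_trans (cost_le_of_cover hd P _ U0 V0 cover) _.
    by rewrite !mulr_ge0 // /gamma; lra.
  by rewrite ler_wpM2r // /gamma; lra.
Qed.
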